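(* For every IFA $\mathcal{A}$ with $n$ states there exists a mod-2-multiplicity automaton $\mathcal{A}'$ with at most $n$ states such that $L_{\mathcal{A}}(w) = L_{\mathcal{A}'}(w)$ for all $w \in \Sigma^*$ (identifying $0,1 \in \mathbb{Q}$ with $0,1 \in \mathbb{Z}_2$).
   Context: For a field $\mathbb{F}$, an $\mathbb{F}$-weighted automaton $\mathcal{A} = (Q, \Sigma, M, \alpha, \eta)$ consists of a finite state set $Q$, finite alphabet $\Sigma$, $M : \Sigma \to \mathbb{F}^{Q\times Q}$, initial row vector $\alpha \in \mathbb{F}^Q$, final column vector $\eta \in \mathbb{F}^Q$; with $M(a_1\cdots a_k) = M(a_1)\cdots M(a_k)$, it assigns $L_\mathcal{A}(w) = \alpha M(w)\eta \in \mathbb{F}$ to each $w \in \Sigma^*$. A $\mathbb{Q}$-weighted automaton is an IFA if $L_\mathcal{A}(w) \in \{0,1\}$ for all $w \in \Sigma^*$. A mod-2-multiplicity automaton is a $\mathbb{Z}_2$-weighted automaton, where $\mathbb{Z}_2 = \{0,1\}$ is the field with two elements; it accepts $w$ iff $L_\mathcal{A}(w) = 1$. The number of states is $|Q|$. *)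

From HB Require Import structures.
From mathcomp Require Import all_boot all_order all_algebra.
Set Implicit Arguments. Unset Strict Implicit. Unset Printing Implicit Defensive.
Import GRing.Theory.
Local Open Scope ring_scope.

Record wautomaton (F : fieldType) (Sigma : finType) (n : nat) := WAutomaton {
  wa_M : Sigma -> 'M[F]_n;
  wa_alpha : 'rV[F]_n;
  wa_eta : 'cV[F]_n
}.

Definition wa_Mword (F : fieldType) (Sigma : finType) (n : nat)
  (A : wautomaton F Sigma n) (w : seq Sigma) : 'M[F]_n :=
  foldr (fun a B => wa_M A a *m B) 1%:M w.

Definition wa_L (F : fieldType) (Sigma : finType) (n : nat)
  (A : wautomaton F Sigma n) (w : seq Sigma) : F :=
  (wa_alpha A *m wa_Mword A w *m wa_eta A) 0 0.

Definition is_IFA (Sigma : finType) (n : nat) (A : wautomaton rat Sigma n) : Prop :=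
  forall w : seq Sigma, wa_L A w = 0 \/ wa_L A w = 1.

(* Embedding of {0,1} in Q into Z_2: 0 |-> 0, anything else |-> 1
   (only applied to values in {0,1}). *)
Definition bit_of_rat (q : rat) : 'F_2 := if q == 0 then 0 else 1.

From mathcomp Require Import all_boot all_order all_algebra.
From Stdlib Require Import ClassicalEpsilon.
Set Implicit Arguments. Unset Strict Implicit. Unset Printing Implicit Defensive.
Import GRing.Theory.
Local Open Scope ring_scope.

(* Let f be the F_2-valued function w |-> L_A(w) mod 2 and pick a nonsingular
   Hankel submatrix (f (u_i v_j))_{i,j<k} of f of maximal size k.  Its integer
   lift is the 0/1 matrix (L_A(u_i v_j)), whose determinant is odd, hence
   nonzero; as L_A(u v) = (alpha M(u)) (M(v) eta), this matrix has rational
   rank at most n, so k <= n.  Maximality makes every bordered Hankel matrix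
   singular, and the Schur complement expresses f(p x) linearly through the
   coordinates of the row of p in the basis of rows indexed by the u_i; these
   coordinates are updated letter by letter by k x k matrices, which is a
   k-state F_2-weighted automaton computing f. *)

Definition hankel (F : fieldType) (Sigma : finType) (f : seq Sigma -> F) k
  (U V : 'I_k -> seq Sigma) : 'M[F]_k := \matrix_(i, j) f (U i ++ V j).

Lemma wa_Mword_cat (F : fieldType) (Sigma : finType) n
  (A : wautomaton F Sigma n) u v :
  wa_Mword A (u ++ v) = wa_Mword A u *m wa_Mword A v.
Proof. by elim: u => [|a u IH] /=; rewrite ?mul1mx // IH mulmxA. Qed.

Lemma det_block_mx_eq0_schur (F : fieldType) k (H : 'M[F]_k) (b : 'cV_k)
  (c : 'rV_k) (d : 'M_1) :
  H \in unitmx -> \det (block_mx H b c d) = 0 -> d = c *m invmx H *m b.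
Proof.
move=> uH det0; have detH0 : \det H != 0 by rewrite -unitfE -unitmxE.
have factor : block_mx H b c d = block_mx 1%:M 0 (c *m invmx H) 1%:M *m
                                 block_mx H b 0 (d - c *m invmx H *m b).
  rewrite mulmx_block !mul1mx !mul0mx !addr0 -mulmxA mulVmx //.
  by rewrite mulmx1 addrC subrK.
move: det0; rewrite factor det_mulmx det_lblock det_ublock !det1 !mul1r.
move/eqP; rewrite mulf_eq0 (negPf detH0) /= det_mx11 => /eqP schur0.
by apply/matrixP => i j; rewrite !ord1; apply/eqP; rewrite -subr_eq0 -schur0 !mxE.
Qed.

Section HankelRealization.

Variables (F : fieldType) (Sigma : finType) (f : seq Sigma -> F) (k : nat).
Variables (U V : 'I_k -> seq Sigma).
Hypothesis hankel_unit : hankel f U V \in unitmx.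
Hypothesis hankel_maximal :
  forall U' V' : 'I_(k + 1) -> seq Sigma, \det (hankel f U' V') = 0.

Definition hankel_coords (p : seq Sigma) : 'rV[F]_k :=
  \row_j f (p ++ V j) *m invmx (hankel f U V).

Definition hankel_trans (a : Sigma) : 'M[F]_k :=
  \matrix_(i, j) f (U i ++ a :: V j) *m invmx (hankel f U V).

Definition hankel_automaton : wautomaton F Sigma k :=
  WAutomaton hankel_trans (hankel_coords [::]) (\col_i f (U i)).

Lemma hankel_cat_coords p x :
  f (p ++ x) = (hankel_coords p *m \col_i f (U i ++ x)) 0 0.
Proof.
pose border (W : 'I_k -> seq Sigma) y (i : 'I_(k + 1)) :=
  if split i is inl i1 then W i1 else y.
have bordered : hankel f (border U p) (border V x) =
    block_mx (hankel f U V) (\col_i f (U i ++ x)) (\row_j f (p ++ V j))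
             (\col_i f (p ++ x)).
  apply/matrixP => i j; rewrite /block_mx /col_mx /row_mx /border !mxE.
  by case: (split i) => i1; rewrite !mxE; case: (split j) => j1; rewrite ?mxE.
have := hankel_maximal (border U p) (border V x).
rewrite bordered => /(det_block_mx_eq0_schur hankel_unit) /matrixP /(_ 0 0).
by rewrite mxE -mulmxA.
Qed.

Lemma hankel_coords_rcons p a :
  hankel_coords p *m hankel_trans a = hankel_coords (rcons p a).
Proof.
rewrite mulmxA; congr (_ *m _); apply/rowP => j.
rewrite !mxE cat_rcons hankel_cat_coords !mxE.
by apply: eq_bigr => i _; rewrite !mxE.
Qed.

Lemma hankel_coords_cat p w :
  hankel_coords p *m wa_Mword hankel_automaton w = hankel_coords (p ++ w).
Proof.
elim: w p => [|a w IH] p /=; first by rewrite mulmx1 cats0.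
by rewrite mulmxA hankel_coords_rcons IH cat_rcons.
Qed.

Lemma hankel_automatonE w : wa_L hankel_automaton w = f w.
Proof.
rewrite /wa_L /= hankel_coords_cat -[w in RHS]cats0 hankel_cat_coords.
by congr ((_ *m _) 0 0); apply/colP => i; rewrite !mxE cats0.
Qed.

End HankelRealization.

Lemma rank_hankel_wa_L (F : fieldType) (Sigma : finType) n
  (A : wautomaton F Sigma n) k (U V : 'I_k -> seq Sigma) :
  (\rank (hankel (wa_L A) U V) <= n)%N.
Proof.
pose P : 'M[F]_(k, n) := \matrix_(i, l) (wa_alpha A *m wa_Mword A (U i)) 0 l.
pose Q : 'M[F]_(n, k) := \matrix_(l, j) (wa_Mword A (V j) *m wa_eta A) l 0.
have -> : hankel (wa_L A) U V = P *m Q.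
  apply/matrixP => i j; rewrite !mxE /wa_L wa_Mword_cat mulmxA -mulmxA mxE.
  by apply: eq_bigr => l _; rewrite !mxE.
exact: leq_trans (mxrankM_maxl P Q) (rank_leq_col P).
Qed.

Lemma det_map_intr_eq0 (R : numDomainType) (S : pzRingType) k (B : 'M[int]_k) :
  \det (map_mx intr B : 'M[R]_k) = 0 -> \det (map_mx intr B : 'M[S]_k) = 0.
Proof. by rewrite !det_map_mx => /eqP; rewrite intr_eq0 => /eqP ->; rewrite rmorph0. Qed.

Lemma IFA_hankel_unit (Sigma : finType) n (A : wautomaton rat Sigma n) k
  (U V : 'I_k -> seq Sigma) :
  is_IFA A -> hankel (bit_of_rat \o wa_L A) U V \in unitmx ->
  hankel (wa_L A) U V \in unitmx.
Proof.
move=> IFA_A; rewrite !unitmxE !unitfE; apply: contra => /eqP det0.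
pose B : 'M[int]_k := \matrix_(i, j) (wa_L A (U i ++ V j) != 0)%:R.
have -> : hankel (bit_of_rat \o wa_L A) U V = map_mx intr B.
  by apply/matrixP => i j; rewrite !mxE /= /bit_of_rat; case: (_ == 0).
apply/eqP/(@det_map_intr_eq0 rat); rewrite -det0; congr (\det _).
by apply/matrixP => i j; rewrite !mxE; case: (IFA_A (U i ++ V j)) => ->.
Qed.

Lemma ex_maxn_classic (P : nat -> Prop) n :
  P 0%N -> (forall k, P k -> (k <= n)%N) ->
  exists k, P k /\ forall j, P j -> (j <= k)%N.
Proof.
move=> P0 P_bounded.
pose b k : bool := if excluded_middle_informative (P k) then true else false.
have bP k : b k <-> P k by rewrite /b; case: excluded_middle_informative.
have b_ex : exists k, b k by exists 0%N; apply/bP.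
have b_bounded k : b k -> (k <= n)%N by move/bP; apply: P_bounded.
case: (ex_maxnP b_ex b_bounded) => k /bP Pk b_max.
by exists k; split=> // j /bP; apply: b_max.
Qed.

Theorem proposition6 (Sigma : finType) (n : nat) (A : wautomaton rat Sigma n) :
  is_IFA A ->
  exists (m : nat) (A' : wautomaton 'F_2 Sigma m),
    (m <= n)%N /\ forall w : seq Sigma, wa_L A' w = bit_of_rat (wa_L A w).
Proof.
move=> IFA_A; pose f := bit_of_rat \o wa_L A.
pose has_unit_hankel k := exists U V : 'I_k -> seq Sigma, hankel f U V \in unitmx.
have size_bound k : has_unit_hankel k -> (k <= n)%N.
  move=> [U [V /(IFA_hankel_unit IFA_A) unitH]].
  by rewrite -(mxrank_unit unitH) rank_hankel_wa_L.
have [|k [[U [V unitH]] k_max]] := ex_maxn_classic _ size_bound.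
  by exists (fun _ => [::]), (fun _ => [::]); rewrite unitmxE det_mx00 unitr1.
have maximal (U' V' : 'I_(k + 1) -> seq Sigma) : \det (hankel f U' V') = 0.
  apply/eqP; apply: contraT; rewrite -unitfE -unitmxE => unitH'.
  by have := k_max _ (ex_intro _ U' (ex_intro _ V' unitH')); rewrite addn1 ltnn.
exists k, (hankel_automaton f U V); split.
  by apply: size_bound; exists U, V.
exact: (hankel_automatonE unitH maximal).
Qed.
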